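(* Let $\alpha\in(0,1)\cup(1,2)$ and let $\rho_{AB}$ be a state on a finite-dimensional $\mathcal{H}_A\otimes\mathcal{H}_B$. Then $$E^F_{(2-\alpha)/\alpha}(A;B)_\rho\geq E^{\mathrm{sq}}_\alpha(A;B)_\rho.$$
   Context: All Hilbert spaces are finite-dimensional and $\log$ is the natural logarithm. For a positive semi-definite $M$ and function $f$, $f(M)$ applies $f$ only to nonzero eigenvalues (negative powers are generalized inverses). For a state $\rho_{ABE}$ and $\alpha\in(0,1)\cup(1,\infty)$, $$I_\alpha(A;B|E)_\rho=\frac{\alpha}{\alpha-1}\log\mathrm{Tr}\Big\{\Big(\rho_E^{(\alpha-1)/2}\,\mathrm{Tr}_A\big\{\rho_{AE}^{(1-\alpha)/2}\rho_{ABE}^{\alpha}\rho_{AE}^{(1-\alpha)/2}\big\}\,\rho_E^{(\alpha-1)/2}\Big)^{1/\alpha}\Big\},$$ and the Rényi squashed entanglement is $E^{\mathrm{sq}}_\alpha(A;B)_\rho=\frac12\inf\{I_\alpha(A;B|E)_\omega:\ \mathrm{Tr}_E\omega_{ABE}=\rho_{AB}\}$ over all extensions on finite-dimensional $\mathcal{H}_E$. For $\beta\in(0,1)\cup(1,\infty)$ the Rényi conditional entropy is $H_\beta(A|B)_\rho=\frac{\beta}{1-\beta}\log\mathrm{Tr}\{(\mathrm{Tr}_A\{\rho_{AB}^\beta\})^{1/\beta}\}$, and the Rényi entanglement of formation is $E^F_\beta(A;B)_\rho=\inf\{H_\beta(A|X)_\sigma:\ \rho_{AB}=\sum_x p_X(x)|\psi^x\rangle\langle\psi^x|_{AB}\}$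 over finite pure-state ensembles, with $\sigma_{XAB}=\sum_x p_X(x)|x\rangle\langle x|_X\otimes|\psi^x\rangle\langle\psi^x|_{AB}$, $\{|x\rangle\}$ orthonormal. *)

From HB Require Import structures.
From mathcomp Require Import all_boot all_order all_algebra.
From mathcomp Require Import complex mxtens.
From mathcomp Require Import boolp classical_sets reals ereal exp.

Set Implicit Arguments.
Unset Strict Implicit.
Unset Printing Implicit Defensive.

Import Order.TTheory GRing.Theory Num.Theory.
Local Open Scope ring_scope.

Section Quantum.
Variable R : realType.
Local Notation C := R[i].

Definition adj m n (M : 'M[C]_(m, n)) : 'M[C]_(n, m) :=
  \matrix_(i, j) (M j i)^*.

Definition psd n (M : 'M[C]_n) : Prop :=
  adj M = M /\ forall v : 'cV[C]_n, 0 <= (adj v *m M *m v) 0 0.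

Definition density n (M : 'M[C]_n) : Prop := psd M /\ \tr M = 1.

(* Functional calculus for a psd (hence normal) matrix, through the spectral
   decomposition M = U^-1 diag(d) U of the library: f is applied only to the
   nonzero eigenvalues, zero eigenvalues are mapped to 0. *)
Definition mxfun n (f : R -> R) (M : 'M[C]_n) : 'M[C]_n :=
  let U := spectralmx M in
  let d := spectral_diag M in
  invmx U *m diag_mx (\row_i (if d 0 i == 0 then 0
                              else ((f (complex.Re (d 0 i)))%:C)%C)) *m U.

(* real power M^p on the support of M (negative p: generalized inverse) *)
Definition mxpow n (M : 'M[C]_n) (p : R) : 'M[C]_n :=
  mxfun (fun x => powR x p) M.

(* Tensor product conventions: H_X (x) H_Y has dimension m * n, the basis
   vector |i>|j> having index mxtens_index (i, j) (Kronecker convention). *)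
Local Notation tidx i j := (mxtens_index (i, j)).

Definition ptr1 m n (M : 'M[C]_(m * n)) : 'M[C]_n :=
  \matrix_(j, j') \sum_(i < m) M (tidx i j) (tidx i j').

Definition ptr2 m n (M : 'M[C]_(m * n)) : 'M[C]_m :=
  \matrix_(i, i') \sum_(j < n) M (tidx i j) (tidx i' j).

(* Tr over the middle factor B: operator on H_A (x) H_E *)
Definition ptr_mid a b e (M : 'M[C]_(a * b * e)) : 'M[C]_(a * e) :=
  \matrix_(k, k')
    \sum_(y < b) M (tidx (tidx (mxtens_unindex k).1 y) (mxtens_unindex k).2)
                   (tidx (tidx (mxtens_unindex k').1 y) (mxtens_unindex k').2).

(* X_AE (x) 1_B as an operator on (H_A (x) H_B) (x) H_E *)
Definition ext_mid a b e (X : 'M[C]_(a * e)) : 'M[C]_(a * b * e) :=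
  \matrix_(k, k')
    (X (tidx (mxtens_unindex (mxtens_unindex k).1).1 (mxtens_unindex k).2)
       (tidx (mxtens_unindex (mxtens_unindex k').1).1 (mxtens_unindex k').2)
     * ((mxtens_unindex (mxtens_unindex k).1).2
         == (mxtens_unindex (mxtens_unindex k').1).2)%:R).

Definition ptr_first a b e (M : 'M[C]_(a * b * e)) : 'M[C]_(b * e) :=
  \matrix_(k, k')
    \sum_(x < a) M (tidx (tidx x (mxtens_unindex k).1) (mxtens_unindex k).2)
                   (tidx (tidx x (mxtens_unindex k').1) (mxtens_unindex k').2).

Definition renyi_cmi (alpha : R) a b e (rho : 'M[C]_(a * b * e)) : R :=
  let rhoE := ptr1 rho in
  let rhoAE := ptr_mid rho in
  let SAE := ext_mid b (mxpow rhoAE ((1 - alpha) / 2)) in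
  let inner := ptr_first (SAE *m mxpow rho alpha *m SAE) in
  let SE := (1%:M : 'M[C]_b) *t mxpow rhoE ((alpha - 1) / 2) in
  alpha / (alpha - 1) *
    ln (complex.Re (\tr (mxpow (SE *m inner *m SE) (1 / alpha)))).

Definition renyi_sq_ent (alpha : R) a b (rho : 'M[C]_(a * b)) : \bar R :=
  ((1 / 2)%:E * ereal_inf
     [set x : \bar R | exists (e : nat) (omega : 'M[C]_(a * b * e)),
         density omega /\ ptr2 omega = rho /\ x = (renyi_cmi alpha omega)%:E])%E.

Definition renyi_cond_ent (beta : R) a b (rho : 'M[C]_(a * b)) : R :=
  beta / (1 - beta) *
    ln (complex.Re (\tr (mxpow (ptr1 (mxpow rho beta)) (1 / beta)))).

Definition proj n (psi : 'cV[C]_n) : 'M[C]_n := psi *m adj psi.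

Definition cq_state a b k (p : 'I_k -> R) (psi : 'I_k -> 'cV[C]_(a * b))
  : 'M[C]_(a * b * k) :=
  \sum_(x < k) (((p x)%:C)%C *: (proj (psi x) *t delta_mx x x)).

Definition renyi_eof (beta : R) a b (rho : 'M[C]_(a * b)) : \bar R :=
  ereal_inf
    [set y : \bar R | exists (k : nat) (p : 'I_k -> R)
                             (psi : 'I_k -> 'cV[C]_(a * b)),
        (forall x, 0 <= p x) /\ \sum_(x < k) p x = 1 /\
        (forall x, (adj (psi x) *m psi x) 0 0 = 1) /\
        rho = \sum_(x < k) (((p x)%:C)%C *: proj (psi x)) /\
        y = (renyi_cond_ent beta (ptr_mid (cq_state p psi)))%:E].

End Quantum.

(** An ensemble [{p x, psi x}] of [rho] gives the extension
    [sigma = sum_x p x |psi x><psi x| (x) |x><x|], which is block diagonal in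
    the register [X], so every matrix function in [I_alpha(A;B|X)_sigma] and
    [H_beta(A|X)_sigma] acts blockwise.  Since both marginals of a pure state
    have the same nonzero spectrum and [(1 - alpha)/2 + alpha + (1 - alpha)/2 = 1],
    with [beta = (2 - alpha)/alpha] and [T x = Tr (psi^x_A)^beta] one gets
      [I_alpha(A;B|X) = alpha/(alpha - 1) ln (sum_x p x T x)],
      [H_beta(A|X)    = beta/(1 - beta) ln (sum_x p x (T x)^(1/beta))].
    Both are the same multiple of logarithms of power means of [T], and Jensen's
    inequality for [t |-> t^s], [0 < s < 1], compares them.  As [sigma] is an
    admissible extension, the squashed entanglement lies below every ensemble
    value. *)
From HB Require Import structures.
From mathcomp Require Import all_boot all_order all_algebra.
From mathcomp Require Import complex mxtens.
From mathcomp Require Import boolp classical_sets reals ereal exp.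
From mathcomp Require Import ring lra.

Set Implicit Arguments.
Unset Strict Implicit.
Unset Printing Implicit Defensive.

Import Order.TTheory GRing.Theory Num.Theory.
Local Open Scope ring_scope.

Section Adjoint.
Variable R : realType.
Local Notation C := R[i].
Local Open Scope sesquilinear_scope.

Lemma conjCM (x y : C) : (x * y)^* = x^* * y^*.
Proof. exact: rmorphM. Qed.

Lemma adjE m n (M : 'M[C]_(m, n)) : adj M = M ^t*.
Proof. by apply/matrixP=> i j; rewrite !mxE. Qed.

Lemma adjK m n (M : 'M[C]_(m, n)) : adj (adj M) = M.
Proof. by apply/matrixP=> i j; rewrite !mxE conjCK. Qed.

Lemma adjM m n p (A : 'M[C]_(m, n)) (B : 'M[C]_(n, p)) :
  adj (A *m B) = adj B *m adj A.
Proof.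
apply/matrixP=> i j; rewrite !mxE rmorph_sum; apply: eq_bigr => k _.
by rewrite !mxE rmorphM mulrC.
Qed.

Lemma adjD m n (A B : 'M[C]_(m, n)) : adj (A + B) = adj A + adj B.
Proof. by apply/matrixP=> i j; rewrite !mxE rmorphD. Qed.

Lemma adjZ m n c (A : 'M[C]_(m, n)) : adj (c *: A) = c^* *: adj A.
Proof. by apply/matrixP=> i j; rewrite !mxE conjCM. Qed.

Lemma adj1 n : adj (1%:M : 'M[C]_n) = 1%:M.
Proof. by rewrite adjE trmx1 map_mx1. Qed.

Lemma adj_diag n (d : 'rV[C]_n) : adj (diag_mx d) = diag_mx (\row_i (d 0 i)^*).
Proof.
by apply/matrixP=> i j; rewrite !mxE eq_sym; case: eqP => [->|_]; rewrite ?conjC0.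
Qed.

Lemma adj_tensmx m n p q (A : 'M[C]_(m, n)) (B : 'M[C]_(p, q)) :
  adj (A *t B) = adj A *t adj B.
Proof.
apply/matrixP=> u v; rewrite -(mxtens_unindexK u) -(mxtens_unindexK v).
by case: (mxtens_unindex u) (mxtens_unindex v) => i x [j y]; rewrite !(mxE, tensmxE) conjCM.
Qed.

Lemma adj_normalmx n (M : 'M[C]_n) : adj M = M -> M \is normalmx.
Proof. by move=> MH; apply/normalmxP; rewrite -adjE MH. Qed.

Lemma conjC_real (r : R) : (r%:C)%C^* = (r%:C)%C :> C.
Proof. by apply: conj_Creal; apply/complex_realP; exists r. Qed.

Lemma adj_realZ n (c : R) (M : 'M[C]_n) : adj M = M ->
  adj ((c%:C)%C *: M) = (c%:C)%C *: M.
Proof. by move=> MH; rewrite adjZ MH conjC_real. Qed.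

End Adjoint.

Section UnitaryDecomposition.
Variable R : realType.
Local Notation C := R[i].
Local Open Scope sesquilinear_scope.

Definition unitary_decomp n (M V : 'M[C]_n) (d : 'rV[C]_n) :=
  V *m adj V = 1%:M /\ M = adj V *m diag_mx d *m V.

Definition map_row (g : C -> C) n (d : 'rV[C]_n) : 'rV[C]_n := \row_i g (d 0 i).

Definition nzfun (f : R -> R) (z : C) : C :=
  if z == 0 then 0 else ((f (complex.Re z))%:C)%C.

Lemma map_row_diag_comm m n (g : C -> C) (d : 'rV[C]_m) (e : 'rV[C]_n) Q :
  diag_mx d *m Q = Q *m diag_mx e ->
  diag_mx (map_row g d) *m Q = Q *m diag_mx (map_row g e).
Proof.
rewrite mul_diag_mx mul_mx_diag => /matrixP dQ.
apply/matrixP=> i j; rewrite mul_diag_mx mul_mx_diag !mxE.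
have [->|Qij_neq0] := eqVneq (Q i j) 0; first by rewrite mulr0 mul0r.
suff -> : d 0 i = e 0 j by rewrite mulrC.
by apply: (mulIf Qij_neq0); have := dQ i j; rewrite !mxE => ->; rewrite mulrC.
Qed.

Lemma unitary_decomp_map_uniq n (M : 'M[C]_n) V d W e (g : C -> C) :
  unitary_decomp M V d -> unitary_decomp M W e ->
  adj V *m diag_mx (map_row g d) *m V = adj W *m diag_mx (map_row g e) *m W.
Proof.
move=> [VU EV] [WU EW]; have VU' := mulmx1C VU; have WU' := mulmx1C WU.
have dV : diag_mx d *m V = V *m M by rewrite EV !mulmxA VU mul1mx.
have We : M *m adj W = adj W *m diag_mx e by rewrite {1}EW -!mulmxA WU mulmx1.
have dVW : diag_mx d *m (V *m adj W) = (V *m adj W) *m diag_mx e.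
  by rewrite mulmxA dV -!mulmxA We.
transitivity (adj V *m (diag_mx (map_row g d) *m (V *m adj W)) *m W).
  by rewrite !mulmxA -[_ *m adj W *m W]mulmxA WU' mulmx1.
by rewrite (map_row_diag_comm g dVW) !mulmxA VU' mul1mx.
Qed.

Lemma invmx_spectralmx n (M : 'M[C]_n) : invmx (spectralmx M) = adj (spectralmx M).
Proof. by rewrite invmx_unitary ?spectral_unitarymx // adjE. Qed.

Lemma unitary_decomp_spectral n (M : 'M[C]_n) : M \is normalmx ->
  unitary_decomp M (spectralmx M) (spectral_diag M).
Proof.
move=> /orthomx_spectralP; rewrite invmx_spectralmx => MS; split=> //.
by rewrite adjE; apply/unitarymxP/spectral_unitarymx.
Qed.

Lemma mxfunE n f (M V : 'M[C]_n) d : M \is normalmx -> unitary_decomp M V d ->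
  mxfun f M = adj V *m diag_mx (map_row (nzfun f) d) *m V.
Proof.
move=> /unitary_decomp_spectral MS /(unitary_decomp_map_uniq (nzfun f) MS) <-.
by rewrite /mxfun invmx_spectralmx.
Qed.

Lemma mxtrace_mxfun n f (M V : 'M[C]_n) d : M \is normalmx ->
  unitary_decomp M V d -> \tr (mxfun f M) = \sum_i nzfun f (d 0 i).
Proof.
move=> Mn MVd; rewrite (mxfunE _ Mn MVd) mxtrace_mulC mulmxA MVd.1 mul1mx mxtrace_diag.
by apply: eq_bigr => i _; rewrite mxE.
Qed.

Lemma mxtrace_unitary_decomp n (M V : 'M[C]_n) d : unitary_decomp M V d ->
  \tr M = \sum_i d 0 i.
Proof. by move=> [VU ->]; rewrite mxtrace_mulC mulmxA VU mul1mx mxtrace_diag. Qed.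

Lemma unitary_decomp_trmx n (M V : 'M[C]_n) d : unitary_decomp M V d ->
  unitary_decomp M^T (adj V)^T d.
Proof.
move=> [VU EV]; have aVT : adj (adj V)^T = V^T by apply/matrixP=> i j; rewrite !mxE conjCK.
split; first by rewrite aVT -trmx_mul VU trmx1.
by rewrite aVT EV !trmx_mul tr_diag_mx mulmxA.
Qed.

Lemma mxtrace_mxfun_trmx n f (M : 'M[C]_n) : adj M = M ->
  \tr (mxfun f M^T) = \tr (mxfun f M).
Proof.
move=> MH; have MS := unitary_decomp_spectral (adj_normalmx MH).
have MTH : adj M^T = M^T by rewrite -{2}MH; apply/matrixP=> i j; rewrite !mxE.
rewrite (mxtrace_mxfun _ (adj_normalmx MTH) (unitary_decomp_trmx MS)).
by rewrite (mxtrace_mxfun _ (adj_normalmx MH) MS).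
Qed.

Lemma unitary_decompM n (V : 'M[C]_n) (d e : 'rV[C]_n) : V *m adj V = 1%:M ->
  (adj V *m diag_mx d *m V) *m (adj V *m diag_mx e *m V) =
  adj V *m diag_mx (\row_j (d 0 j * e 0 j)) *m V.
Proof.
move=> VU; transitivity (adj V *m diag_mx d *m (V *m adj V) *m diag_mx e *m V).
  by rewrite !mulmxA.
by rewrite VU mulmx1 -mulmx_diag !mulmxA.
Qed.

Lemma unitary_decomp_diag n (d : 'rV[C]_n) : unitary_decomp (diag_mx d) 1%:M d.
Proof. by split; rewrite adj1 ?mulmx1 ?mul1mx. Qed.

End UnitaryDecomposition.

Section PsdPowers.
Variable R : realType.
Local Notation C := R[i].

Definition realrow n (l : 'I_n -> R) : 'rV[C]_n := \row_i ((l i)%:C)%C.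

Definition psd_decomp n (M V : 'M[C]_n) (l : 'I_n -> R) :=
  unitary_decomp M V (realrow l) /\ forall i, 0 <= l i.

Lemma psd_decomp_adj n (M V : 'M[C]_n) l : psd_decomp M V l -> adj M = M.
Proof.
move=> [[_ ->] _]; rewrite !adjM adjK adj_diag mulmxA.
by congr (_ *m diag_mx _ *m _); apply/rowP=> i; rewrite !mxE conjC_real.
Qed.

Lemma nzfun_powR (r p : R) : 0 <= r -> p != 0 ->
  nzfun (fun x => powR x p) (r%:C)%C = ((powR r p)%:C)%C.
Proof.
move=> r_ge0 p_neq0; rewrite /nzfun.
by case: eqP => [/(@complexI R) ->|//]; rewrite powR0.
Qed.

Lemma mxpowE n (M V : 'M[C]_n) l p : psd_decomp M V l -> p != 0 ->
  mxpow M p = adj V *m diag_mx (realrow (fun i => powR (l i) p)) *m V.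
Proof.
move=> MVl p_neq0; rewrite /mxpow (mxfunE _ _ MVl.1); last first.
  exact/adj_normalmx/(psd_decomp_adj MVl).
by congr (_ *m diag_mx _ *m _); apply/rowP=> i; rewrite !mxE nzfun_powR ?MVl.2.
Qed.

Lemma psd_decomp_mxpow n (M V : 'M[C]_n) l p : psd_decomp M V l -> p != 0 ->
  psd_decomp (mxpow M p) V (fun i => powR (l i) p).
Proof.
by move=> MVl p_neq0; split=> [|i]; [split; [exact: MVl.1.1|exact: mxpowE] | exact: powR_ge0].
Qed.

Lemma psd_unitary_decomp_ge0 n (M V : 'M[C]_n) d i : psd M ->
  unitary_decomp M V d -> 0 <= d 0 i.
Proof.
move=> [_ M_ge0] [VU EV]; have := M_ge0 (adj V *m delta_mx i 0).
rewrite adjM adjK EV !mulmxA -[_ *m V *m adj V]mulmxA VU mulmx1.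
rewrite -[_ *m V *m adj V]mulmxA VU mulmx1.
have -> : adj (delta_mx i 0 : 'cV[C]_n) = delta_mx 0 i.
  by apply/matrixP=> u v; rewrite !mxE [in RHS]andbC conjC_nat.
rewrite -mulmxA mul_diag_mx mxE (bigD1 i) //= big1 ?addr0.
  by rewrite !mxE !eqxx mulr1 mul1r.
by move=> j ji; rewrite !mxE (negbTE ji) mul0r.
Qed.

Lemma psd_decompP n (M : 'M[C]_n) : psd M -> exists V l, psd_decomp M V l.
Proof.
move=> M_psd; have MS := unitary_decomp_spectral (adj_normalmx M_psd.1).
have dP i := psd_unitary_decomp_ge0 i M_psd MS.
exists (spectralmx M), (fun i => complex.Re (spectral_diag M 0 i)); split=> [|i].
  suff -> : realrow (fun i => complex.Re (spectral_diag M 0 i)) = spectral_diag M by [].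
  by apply/rowP=> i; rewrite !mxE; move: (dP i); case: (spectral_diag M 0 i) => a b;
    rewrite lecE /= => /andP[/eqP -> _].
by move: (dP i); case: (spectral_diag M 0 i) => a b; rewrite lecE /= => /andP[_].
Qed.

Lemma psd_decompZ n (M V : 'M[C]_n) l c : psd_decomp M V l -> 0 <= c ->
  psd_decomp ((c%:C)%C *: M) V (fun i => c * l i).
Proof.
move=> [[VU EV] l_ge0] c_ge0; split=> [|i]; last by rewrite mulr_ge0.
split=> //; rewrite EV scalemxAl scalemxAr; congr (_ *m _ *m _).
by apply/matrixP=> i j; rewrite !mxE rmorphM mulrnAr.
Qed.

Lemma mxpowZ n (M V : 'M[C]_n) l c p : psd_decomp M V l -> 0 <= c -> p != 0 ->
  mxpow ((c%:C)%C *: M) p = ((powR c p)%:C)%C *: mxpow M p.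
Proof.
move=> MVl c_ge0 p_neq0; rewrite (mxpowE (psd_decompZ MVl c_ge0) p_neq0).
rewrite (mxpowE MVl p_neq0) scalemxAl scalemxAr; congr (_ *m _ *m _).
by apply/matrixP=> i j; rewrite !mxE powRM ?MVl.2 // rmorphM mulrnAr.
Qed.

Lemma mxpow_sandwich n (M V : 'M[C]_n) l q : psd_decomp M V l -> q != 0 ->
  q + 1 + q != 0 -> mxpow M q *m M *m mxpow M q = mxpow M (q + 1 + q).
Proof.
move=> MVl q_neq0 q2_neq0; rewrite (mxpowE MVl q_neq0) (mxpowE MVl q2_neq0).
rewrite {1}MVl.1.2 !(unitary_decompM _ _ MVl.1.1); congr (_ *m diag_mx _ *m _).
apply/rowP=> i; rewrite !mxE -!rmorphM; congr (_%:C)%C.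
have [->|li_neq0] := eqVneq (l i) 0; first by rewrite mulr0 mul0r powR0.
by rewrite !powRD ?li_neq0 ?implybT // powRr1 ?MVl.2.
Qed.

Lemma mxpow_mxpow n (M V : 'M[C]_n) l p q : psd_decomp M V l -> p != 0 ->
  q != 0 -> mxpow (mxpow M p) q = mxpow M (p * q).
Proof.
move=> MVl p_neq0 q_neq0; rewrite (mxpowE (psd_decomp_mxpow MVl p_neq0) q_neq0).
rewrite (mxpowE MVl (mulf_neq0 p_neq0 q_neq0)).
by congr (_ *m diag_mx _ *m _); apply/rowP=> i; rewrite !mxE powRrM.
Qed.

Lemma mxpow_idem n (P V : 'M[C]_n) l p : psd_decomp P V l -> P *m P = P ->
  p != 0 -> mxpow P p = P.
Proof.
move=> PVl PP p_neq0; rewrite (mxpowE PVl p_neq0) {1}PVl.1.2.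
congr (_ *m diag_mx _ *m _); apply/rowP=> i.
have conjV d : V *m (adj V *m diag_mx d *m V) *m adj V = diag_mx d.
  by rewrite !mulmxA PVl.1.1 mul1mx -mulmxA PVl.1.1 mulmx1.
have := PP; rewrite {1 2 3}PVl.1.2 (unitary_decompM _ _ PVl.1.1).
move=> /(congr1 (fun X => V *m X *m adj V)); rewrite !conjV.
move=> /matrixP/(_ i i); rewrite !mxE !eqxx !mulr1n -rmorphM => /complexI li2.
have : l i * (l i - 1) = 0 by rewrite mulrBr mulr1 li2 subrr.
move/eqP; rewrite mulf_eq0 subr_eq0 => /orP[]/eqP ->.
  by rewrite powR0.
by rewrite powR1.
Qed.

Lemma mxpow_diag n (l : 'I_n -> R) p : (forall i, 0 <= l i) -> p != 0 ->
  mxpow (diag_mx (realrow l)) p = diag_mx (realrow (fun i => powR (l i) p)).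
Proof.
move=> l_ge0 p_neq0; rewrite (@mxpowE _ _ 1%:M l) //; last by split=> //; exact: unitary_decomp_diag.
by rewrite adj1 mulmx1 mul1mx.
Qed.

Lemma psd_decomp_trace1_pos n (M V : 'M[C]_n) l : psd_decomp M V l ->
  \tr M = 1 -> exists i, 0 < l i.
Proof.
move=> MVl; rewrite (mxtrace_unitary_decomp MVl.1).
have [i|l_le0] := pickP (fun i => 0 < l i); first by exists i.
rewrite big1 => [/eqP|i _]; first by rewrite eq_sym oner_eq0.
by rewrite mxE; have := MVl.2 i; rewrite le_eqVlt l_le0 orbF => /eqP <-.
Qed.

Lemma psd_gram m n (X : 'M[C]_(m, n)) : psd (X *m adj X).
Proof.
split=> [|v]; first by rewrite adjM adjK.
have -> : adj v *m (X *m adj X) *m v = adj (adj X *m v) *m (adj X *m v).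
  by rewrite adjM adjK !mulmxA.
rewrite mxE.
by apply: sumr_ge0 => i _; rewrite mxE mulrC mul_conjC_ge0.
Qed.

End PsdPowers.

Section BlockDiagonal.
Variable R : realType.
Local Notation C := R[i].
Local Notation tidx i j := (mxtens_index (i, j)).
Local Notation ui u := (mxtens_unindex u).

(* The operator [sum_x F x (x) |x><x|] on [H (x) H_X]. *)
Definition bdiag m k (F : 'I_k -> 'M[C]_m) : 'M[C]_(m * k) :=
  \matrix_(u, v) (((ui u).2 == (ui v).2)%:R * F (ui u).2 (ui u).1 (ui v).1).

Lemma bdiagE m k (F : 'I_k -> 'M[C]_m) i x j y :
  bdiag F (tidx i x) (tidx j y) = (x == y)%:R * F x i j.
Proof. by rewrite mxE !mxtens_indexK. Qed.

Lemma sum_tidx m k (G : 'I_(m * k) -> C) :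
  \sum_u G u = \sum_i \sum_x G (tidx i x).
Proof.
rewrite pair_big /= (reindex (@mxtens_index m k)) /=.
  by apply: eq_bigr => -[i x] _.
by exists (@mxtens_unindex m k) => u _; [apply: mxtens_indexK|apply: mxtens_unindexK].
Qed.

Lemma tidx_matrixP m k m' k' (A B : 'M[C]_(m * k, m' * k')) :
  (forall i x j y, A (tidx i x) (tidx j y) = B (tidx i x) (tidx j y)) -> A = B.
Proof.
move=> AB; apply/matrixP=> u v; rewrite -(mxtens_unindexK u) -(mxtens_unindexK v).
by case: (ui u) (ui v) => ? ? [? ?].
Qed.

Lemma bdiag_ext m k (F G : 'I_k -> 'M[C]_m) :
  (forall x, F x = G x) -> bdiag F = bdiag G.
Proof. by move=> FG; congr bdiag; apply: funext. Qed.

Lemma bdiag_mul m k (F G : 'I_k -> 'M[C]_m) :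
  bdiag F *m bdiag G = bdiag (fun x => F x *m G x).
Proof.
apply: tidx_matrixP => i x j y; rewrite bdiagE !mxE sum_tidx mulr_sumr.
apply: eq_bigr => l _; rewrite (bigD1 x) //= big1 => [|z zx].
  rewrite !bdiagE eqxx mul1r addr0 mulrCA.
  by case: (x == y); rewrite ?mul0r ?mul1r ?mulr0.
by rewrite bdiagE eq_sym (negbTE zx) !mul0r.
Qed.

Lemma adj_bdiag m k (F : 'I_k -> 'M[C]_m) :
  adj (bdiag F) = bdiag (fun x => adj (F x)).
Proof.
apply: tidx_matrixP => i x j y; rewrite mxE !bdiagE mxE conjCM conjC_nat eq_sym.
by case: eqP => [->|_]; rewrite ?mul0r ?mul1r.
Qed.

Lemma bdiag_diag m k (d : 'I_k -> 'rV[C]_m) :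
  bdiag (fun x => diag_mx (d x)) = diag_mx (\row_u d (ui u).2 0 (ui u).1).
Proof.
apply: tidx_matrixP => i x j y; rewrite bdiagE !mxE !mxtens_indexK /=.
rewrite (inj_eq (can_inj (@mxtens_indexK m k))) xpair_eqE.
by case: (x == y); case: (i == j); rewrite ?mul0r ?mul1r ?andbF.
Qed.

Lemma bdiag1 m k : bdiag (fun _ : 'I_k => 1%:M : 'M[C]_m) = 1%:M.
Proof.
apply: tidx_matrixP => i x j y; rewrite bdiagE !mxE.
rewrite (inj_eq (can_inj (@mxtens_indexK m k))) xpair_eqE.
by case: (x == y); case: (i == j); rewrite ?mul0r ?mul1r ?andbF.
Qed.

Lemma mxtrace_bdiag m k (F : 'I_k -> 'M[C]_m) : \tr (bdiag F) = \sum_x \tr (F x).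
Proof.
rewrite /mxtrace sum_tidx exchange_big /=; apply: eq_bigr => x _.
by apply: eq_bigr => i _; rewrite bdiagE eqxx mul1r.
Qed.

Lemma unitary_decomp_bdiag m k (F V : 'I_k -> 'M[C]_m) d :
  (forall x, unitary_decomp (F x) (V x) (d x)) ->
  unitary_decomp (bdiag F) (bdiag V) (\row_u d (ui u).2 0 (ui u).1).
Proof.
move=> FVd; split.
  by rewrite adj_bdiag bdiag_mul -bdiag1; apply: bdiag_ext => x; case: (FVd x).
by rewrite adj_bdiag -bdiag_diag !bdiag_mul; apply: bdiag_ext => x; case: (FVd x).
Qed.

Lemma mxfun_bdiag f m k (F : 'I_k -> 'M[C]_m) : (forall x, adj (F x) = F x) ->
  mxfun f (bdiag F) = bdiag (fun x => mxfun f (F x)).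
Proof.
move=> FH; have FS x := unitary_decomp_spectral (adj_normalmx (FH x)).
have FbH : adj (bdiag F) = bdiag F by rewrite adj_bdiag; apply: bdiag_ext.
rewrite (mxfunE _ (adj_normalmx FbH) (unitary_decomp_bdiag FS)).
rewrite (bdiag_ext (fun x => mxfunE f (adj_normalmx (FH x)) (FS x))).
rewrite -!bdiag_mul -adj_bdiag bdiag_diag; congr (_ *m diag_mx _ *m _).
by apply/rowP=> u; rewrite !mxE.
Qed.

Lemma mxpow_bdiagZ m k (c : 'I_k -> R) (M : 'I_k -> 'M[C]_m) q :
  (forall x, psd (M x)) -> (forall x, 0 <= c x) -> q != 0 ->
  mxpow (bdiag (fun x => ((c x)%:C)%C *: M x)) q =
  bdiag (fun x => ((powR (c x) q)%:C)%C *: mxpow (M x) q).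
Proof.
move=> M_psd c_ge0 q_neq0; rewrite /mxpow mxfun_bdiag => [|x].
  apply: bdiag_ext => x; have [V [l MVl]] := psd_decompP (M_psd x).
  exact: mxpowZ MVl (c_ge0 x) q_neq0.
exact/adj_realZ/(M_psd x).1.
Qed.

End BlockDiagonal.

Section PartialTraces.
Variable R : realType.
Local Notation C := R[i].
Local Notation tidx i j := (mxtens_index (i, j)).
Local Notation ui u := (mxtens_unindex u).

Lemma tidx3_matrixP a b k a' b' k' (A B : 'M[C]_(a * b * k, a' * b' * k')) :
  (forall i j x i' j' x', A (tidx (tidx i j) x) (tidx (tidx i' j') x') =
                          B (tidx (tidx i j) x) (tidx (tidx i' j') x')) -> A = B.
Proof.
move=> AB; apply: tidx_matrixP => w x w' x'.
by rewrite -(mxtens_unindexK w) -(mxtens_unindexK w'); case: (ui w) (ui w') => ? ? [? ?].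
Qed.

Lemma ptr2_bdiag m k (F : 'I_k -> 'M[C]_m) : ptr2 (bdiag F) = \sum_x F x.
Proof.
apply/matrixP=> i j; rewrite !mxE summxE; apply: eq_bigr => x _.
by rewrite bdiagE eqxx mul1r.
Qed.

Lemma ptr1_bdiag m k (F : 'I_k -> 'M[C]_m) :
  ptr1 (bdiag F) = diag_mx (\row_x \tr (F x)).
Proof.
apply/matrixP=> x y; rewrite !mxE; under eq_bigr do rewrite bdiagE.
by rewrite -mulr_sumr mulr_natl eq_sym.
Qed.

Lemma ptr_mid_bdiag a b k (F : 'I_k -> 'M[C]_(a * b)) :
  ptr_mid (bdiag F) = bdiag (fun x => ptr2 (F x)).
Proof.
apply: tidx_matrixP => i x j y; rewrite bdiagE !mxE !mxtens_indexK /=.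
by under eq_bigr do rewrite bdiagE; rewrite -mulr_sumr.
Qed.

Lemma ptr_first_bdiag a b k (F : 'I_k -> 'M[C]_(a * b)) :
  ptr_first (bdiag F) = bdiag (fun x => ptr1 (F x)).
Proof.
apply: tidx_matrixP => i x j y; rewrite bdiagE !mxE !mxtens_indexK /=.
by under eq_bigr do rewrite bdiagE; rewrite -mulr_sumr.
Qed.

Lemma ext_mid_bdiag a b k (G : 'I_k -> 'M[C]_a) :
  ext_mid b (bdiag G) = bdiag (fun x => G x *t (1%:M : 'M[C]_b)).
Proof. by apply: tidx3_matrixP => i j x i' j' x'; rewrite !mxE !mxtens_indexK /= mulrA. Qed.

Lemma tens1mx_diag b k (d : 'rV[C]_k) :
  (1%:M : 'M[C]_b) *t diag_mx d = bdiag (fun x => d 0 x *: 1%:M).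
Proof.
apply: tidx_matrixP => j x j' x'; rewrite tensmxE bdiagE !mxE.
by case: (x =P x') => [->|_]; case: (j == j'); rewrite ?mulr0 ?mul0r ?mulr1 ?mul1r.
Qed.

Lemma tensmxZl m n p q (c : C) (A : 'M[C]_(m, n)) (B : 'M[C]_(p, q)) :
  (c *: A) *t B = c *: (A *t B).
Proof. by apply: tidx_matrixP => i x j y; rewrite !mxE !mxtens_indexK mulrA. Qed.

Lemma cq_stateE a b k (p : 'I_k -> R) (psi : 'I_k -> 'cV[C]_(a * b)) :
  cq_state p psi = bdiag (fun x => ((p x)%:C)%C *: proj (psi x)).
Proof.
apply: tidx_matrixP => w y w' y'; rewrite bdiagE summxE (bigD1 y) //= big1 ?addr0.
  rewrite mxE tensmxE [delta_mx _ _ _ _]mxE eqxx [in RHS]mxE.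
  by rewrite eq_sym mulrCA mulrA mulr_natr mulr_natl mulrC.
by move=> x xy; rewrite mxE tensmxE [delta_mx _ _ _ _]mxE eq_sym (negbTE xy) !mulr0.
Qed.

Lemma ptr2Z m n (c : C) (M : 'M[C]_(m * n)) : ptr2 (c *: M) = c *: ptr2 M.
Proof. by apply/matrixP=> i j; rewrite !mxE mulr_sumr; apply: eq_bigr => y _; rewrite mxE. Qed.

Lemma ptr1Z m n (c : C) (M : 'M[C]_(m * n)) : ptr1 (c *: M) = c *: ptr1 M.
Proof. by apply/matrixP=> i j; rewrite !mxE mulr_sumr; apply: eq_bigr => y _; rewrite mxE. Qed.

Lemma mxtrace_ptr2 m n (M : 'M[C]_(m * n)) : \tr (ptr2 M) = \tr M.
Proof. by rewrite /mxtrace sum_tidx; apply: eq_bigr => i _; rewrite mxE. Qed.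

Lemma mxtrace_proj n (v : 'cV[C]_n) : \tr (proj v) = (adj v *m v) 0 0.
Proof. by rewrite /proj mxtrace_mulC /mxtrace big_ord1. Qed.

Lemma proj_idem n (v : 'cV[C]_n) : (adj v *m v) 0 0 = 1 -> proj v *m proj v = proj v.
Proof.
move=> v_unit; have vv : adj v *m v = 1%:M by apply/matrixP=> i j; rewrite !ord1 v_unit mxE.
by rewrite /proj mulmxA -[v *m adj v *m v]mulmxA vv mulmx1.
Qed.

Definition vec_to_mx a b (v : 'cV[C]_(a * b)) : 'M[C]_(a, b) :=
  \matrix_(i, j) v (tidx i j) 0.

Lemma ptr2_proj a b (v : 'cV[C]_(a * b)) :
  ptr2 (proj v) = vec_to_mx v *m adj (vec_to_mx v).
Proof.
apply/matrixP=> i i'; rewrite !mxE; apply: eq_bigr => j _.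
by rewrite !mxE big_ord1 !mxE.
Qed.

Lemma ptr1_proj a b (v : 'cV[C]_(a * b)) :
  ptr1 (proj v) = (vec_to_mx v)^T *m adj (vec_to_mx v)^T.
Proof.
apply/matrixP=> j j'; rewrite !mxE; apply: eq_bigr => i _.
by rewrite !mxE big_ord1 !mxE.
Qed.

Lemma vec_to_mx_tens a b (A : 'M[C]_a) (v : 'cV[C]_(a * b)) :
  vec_to_mx ((A *t (1%:M : 'M[C]_b)) *m v) = A *m vec_to_mx v.
Proof.
apply/matrixP=> i j; rewrite !mxE sum_tidx; apply: eq_bigr => i' _.
rewrite (bigD1 j) //= big1 ?addr0 => [|j' j'j]; first by rewrite tensmxE !mxE eqxx mulr1.
by rewrite tensmxE !mxE eq_sym (negbTE j'j) mulr0 mul0r.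
Qed.

End PartialTraces.

Section SchmidtSymmetry.
Variable R : realType.
Local Notation C := R[i].

Lemma sum_nzfun_diag_gram m n f (Q : 'M[C]_(m, n)) (d : 'rV[C]_m) (e : 'rV[C]_n) :
  Q *m adj Q = diag_mx d -> adj Q *m Q = diag_mx e ->
  \sum_i nzfun f (d 0 i) = \sum_j nzfun f (e 0 j).
Proof.
move=> QQd QQe.
have dQ : diag_mx d *m Q = Q *m diag_mx e by rewrite -QQd -QQe mulmxA.
have de i j : Q i j != 0 -> d 0 i = e 0 j.
  move=> Qij_neq0; move/matrixP: dQ => /(_ i j); rewrite mul_diag_mx mul_mx_diag !mxE.
  by move=> dQij; apply: (mulIf Qij_neq0); rewrite dQij mulrC.
have dE i : d 0 i = \sum_j Q i j * (Q i j)^*.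
  move/matrixP: QQd => /(_ i i); rewrite !mxE eqxx mulr1n => <-.
  by apply: eq_bigr => j _; rewrite mxE.
have eE j : e 0 j = \sum_i Q i j * (Q i j)^*.
  move/matrixP: QQe => /(_ j j); rewrite !mxE eqxx mulr1n => <-.
  by apply: eq_bigr => i _; rewrite mxE mulrC.
(* Write [nzfun f z = h z * z]; then both sides are [sum_ij h(.) |Q i j|^2]. *)
pose h z := nzfun f z / z.
have hE z : nzfun f z = h z * z.
  by rewrite /h; have [->|z_neq0] := eqVneq z 0; [rewrite /nzfun eqxx mulr0 | rewrite divfK].
transitivity (\sum_i \sum_j h (d 0 i) * (Q i j * (Q i j)^*)).
  by apply: eq_bigr => i _; rewrite hE dE mulr_sumr.
rewrite exchange_big /=; apply: eq_bigr => j _; rewrite hE; set t := h _.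
rewrite eE mulr_sumr.
apply: eq_bigr => i _; have [->|Qij_neq0] := eqVneq (Q i j) 0; first by rewrite !mul0r !mulr0.
by rewrite (de _ _ Qij_neq0).
Qed.

Lemma sum_nzfun_gram_decompC m n f (Y : 'M[C]_(m, n)) U d V e :
  unitary_decomp (Y *m adj Y) U d -> unitary_decomp (adj Y *m Y) V e ->
  \sum_i nzfun f (d 0 i) = \sum_j nzfun f (e 0 j).
Proof.
move=> [UU EU] [VU EV]; have UU' := mulmx1C UU; have VU' := mulmx1C VU.
apply: (@sum_nzfun_diag_gram _ _ _ (U *m Y *m adj V)).
  rewrite !adjM !adjK !mulmxA -[U *m Y *m adj V *m V]mulmxA VU' mulmx1.
  by rewrite -[U *m Y *m adj Y]mulmxA EU !mulmxA UU mul1mx -mulmxA UU mulmx1.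
rewrite !adjM !adjK !mulmxA -[V *m adj Y *m adj U *m U]mulmxA UU' mulmx1.
by rewrite -[V *m adj Y *m Y]mulmxA EV !mulmxA VU mul1mx -mulmxA VU mulmx1.
Qed.

Lemma mxtrace_mxfun_gramC m n f (Y : 'M[C]_(m, n)) :
  \tr (mxfun f (Y *m adj Y)) = \tr (mxfun f (adj Y *m Y)).
Proof.
have /adj_normalmx YYn : adj (Y *m adj Y) = Y *m adj Y by rewrite adjM adjK.
have /adj_normalmx YYn' : adj (adj Y *m Y) = adj Y *m Y by rewrite adjM adjK.
have YYS := unitary_decomp_spectral YYn; have YYS' := unitary_decomp_spectral YYn'.
rewrite (mxtrace_mxfun _ YYn YYS) (mxtrace_mxfun _ YYn' YYS').
exact: sum_nzfun_gram_decompC YYS YYS'.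
Qed.

Lemma mxtrace_mxfun_ptr1_proj a b f (v : 'cV[C]_(a * b)) :
  \tr (mxfun f (ptr1 (proj v))) = \tr (mxfun f (ptr2 (proj v))).
Proof.
rewrite ptr1_proj mxtrace_mxfun_gramC ptr2_proj -mxtrace_mxfun_trmx.
  congr (\tr (mxfun f _)); apply/matrixP=> i i'; rewrite !mxE.
  by apply: eq_bigr => j _; rewrite !mxE mulrC.
by rewrite adjM adjK.
Qed.

End SchmidtSymmetry.

Section States.
Variable R : realType.
Local Notation C := R[i].

Lemma powR_sandwich (c u v : R) : 0 <= c -> v != 0 -> u + v + u != 0 ->
  powR c u * powR c v * powR c u = powR c (u + v + u).
Proof.
move=> c_ge0 v_neq0 uvu_neq0; have [->|c_neq0] := eqVneq c 0.
  by rewrite (powR0 v_neq0) (powR0 uvu_neq0) mulr0 mul0r.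
by rewrite -!powRD ?c_neq0 ?implybT.
Qed.

Lemma realCM (x y : R) : ((x * y)%:C)%C = (x%:C)%C * (y%:C)%C :> C.
Proof. exact: rmorphM. Qed.

Lemma realC_sum I (r : seq I) (F : I -> R) :
  ((\sum_(i <- r) F i)%:C)%C = \sum_(i <- r) ((F i)%:C)%C :> C.
Proof. exact: rmorph_sum. Qed.

Lemma scalemx_mul3 n (c1 c2 c3 : C) (X Y Z : 'M[C]_n) :
  (c1 *: X) *m (c2 *: Y) *m (c3 *: Z) = (c1 * c2 * c3) *: (X *m Y *m Z).
Proof. by rewrite -!scalemxAl -!scalemxAr -!scalemxAl !scalerA [c3 * c2]mulrC mulrA. Qed.

Lemma psd_proj n (v : 'cV[C]_n) : psd (proj v).
Proof. exact: psd_gram. Qed.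

Lemma psd_ptr2_proj a b (v : 'cV[C]_(a * b)) : psd (ptr2 (proj v)).
Proof. by rewrite ptr2_proj; apply: psd_gram. Qed.

Lemma psd_ptr1_proj a b (v : 'cV[C]_(a * b)) : psd (ptr1 (proj v)).
Proof. by rewrite ptr1_proj; apply: psd_gram. Qed.

Lemma psd0 n : psd (0 : 'M[C]_n).
Proof.
split=> [|v]; first by apply/matrixP=> i j; rewrite !mxE conjC0.
by rewrite mulmx0 mul0mx mxE.
Qed.

Lemma psdD n (A B : 'M[C]_n) : psd A -> psd B -> psd (A + B).
Proof.
move=> [AH A_ge0] [BH B_ge0]; split=> [|v]; first by rewrite adjD AH BH.
by rewrite mulmxDr mulmxDl mxE addr_ge0.
Qed.

Lemma psd_realZ n (c : R) (A : 'M[C]_n) : 0 <= c -> psd A -> psd ((c%:C)%C *: A).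
Proof.
move=> c_ge0 [AH A_ge0]; split=> [|v]; first exact: adj_realZ.
by rewrite -scalemxAr -scalemxAl mxE mulr_ge0 // ler0c.
Qed.

Lemma density_mxtrace_mxpow n (M : 'M[C]_n) s : density M -> s != 0 ->
  let t := complex.Re (\tr (mxpow M s)) in \tr (mxpow M s) = (t%:C)%C /\ 0 < t.
Proof.
move=> [M_psd trM] s_neq0; have [V [l MVl]] := psd_decompP M_psd.
have [i li_gt0] := psd_decomp_trace1_pos MVl trM.
have -> : \tr (mxpow M s) = ((\sum_j powR (l j) s)%:C)%C.
  rewrite (mxtrace_unitary_decomp (psd_decomp_mxpow MVl s_neq0).1) realC_sum.
  by apply: eq_bigr => j _; rewrite mxE.
split=> //=; apply: lt_le_trans (powR_gt0 s li_gt0) _.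
by rewrite (bigD1 i) //= lerDl sumr_ge0 // => j _; apply: powR_ge0.
Qed.

End States.

Section ClassicalExtension.
Variable R : realType.
Local Notation C := R[i].
Variables (a b k : nat) (p : 'I_k -> R) (psi : 'I_k -> 'cV[C]_(a * b)).
Hypothesis p_ge0 : forall x, 0 <= p x.
Hypothesis psi_unit : forall x, (adj (psi x) *m psi x) 0 0 = 1.

Local Notation sigma := (cq_state p psi).
Local Notation psiA x := (ptr2 (proj (psi x))).

Lemma density_cq_state : \sum_x p x = 1 -> density sigma.
Proof.
move=> p_sum1; split.
  apply: big_ind => [|A B|x _]; [exact: psd0 | exact: psdD |].
  apply: psd_realZ (p_ge0 x) _.
  have -> : proj (psi x) *t delta_mx x x = proj (psi x *t (delta_mx x 0 : 'cV_k)).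
    rewrite /proj (adj_tensmx (psi x) (delta_mx x 0 : 'cV_k)).
    rewrite (tensmx_mul (psi x) (delta_mx x 0 : 'cV_k)); congr (_ *t _).
    by apply/matrixP=> i j; rewrite !mxE big_ord1 !mxE; case: (i == x); case: (j == x);
      rewrite ?mul0r ?mul1r ?conjC0 ?conjC1.
  exact: psd_proj.
rewrite cq_stateE mxtrace_bdiag (eq_bigr (fun x => ((p x)%:C)%C)) => [|x _].
  by rewrite -realC_sum p_sum1.
by rewrite mxtraceZ mxtrace_proj psi_unit mulr1.
Qed.

Lemma ptr2_cq_state : ptr2 sigma = \sum_x ((p x)%:C)%C *: proj (psi x).
Proof. by rewrite cq_stateE ptr2_bdiag. Qed.

Lemma ptr1_cq_state : ptr1 sigma = diag_mx (realrow p).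
Proof.
rewrite cq_stateE ptr1_bdiag; congr diag_mx; apply/rowP=> x.
by rewrite !mxE mxtraceZ mxtrace_proj psi_unit mulr1.
Qed.

Lemma ptr_mid_cq_state : ptr_mid sigma = bdiag (fun x => ((p x)%:C)%C *: psiA x).
Proof. by rewrite cq_stateE ptr_mid_bdiag; apply: bdiag_ext => x; rewrite ptr2Z. Qed.

Lemma mxpow_cq_state s : s != 0 ->
  mxpow sigma s = bdiag (fun x => ((powR (p x) s)%:C)%C *: proj (psi x)).
Proof.
move=> s_neq0; rewrite cq_stateE mxpow_bdiagZ // => [|x]; last exact: psd_proj.
apply: bdiag_ext => x; have [V [l MVl]] := psd_decompP (psd_proj (psi x)).
by rewrite (mxpow_idem MVl (proj_idem (psi_unit x)) s_neq0).
Qed.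

Lemma density_psiA x : density (psiA x).
Proof. by split; [exact: psd_ptr2_proj | rewrite mxtrace_ptr2 mxtrace_proj psi_unit]. Qed.

Definition renyi_trace s x := complex.Re (\tr (mxpow (psiA x) s)).

Lemma renyi_traceE s x : s != 0 -> \tr (mxpow (psiA x) s) = ((renyi_trace s x)%:C)%C.
Proof. by move=> s_neq0; case: (density_mxtrace_mxpow (density_psiA x) s_neq0). Qed.

Lemma renyi_trace_gt0 s x : s != 0 -> 0 < renyi_trace s x.
Proof. by move=> s_neq0; case: (density_mxtrace_mxpow (density_psiA x) s_neq0). Qed.

Lemma renyi_cond_ent_cq_state beta : beta != 0 ->
  renyi_cond_ent beta (ptr_mid sigma) =
  beta / (1 - beta) * ln (\sum_x p x * powR (renyi_trace beta x) (1 / beta)).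
Proof.
move=> beta_neq0; have ibeta_neq0 : 1 / beta != 0 by rewrite mul1r invr_eq0.
have T_ge0 x := ltW (renyi_trace_gt0 x beta_neq0).
rewrite /renyi_cond_ent ptr_mid_cq_state mxpow_bdiagZ // => [|x]; last exact: psd_ptr2_proj.
rewrite ptr1_bdiag.
have -> : \row_x \tr (((powR (p x) beta)%:C)%C *: mxpow (psiA x) beta) =
          realrow (fun x => powR (p x) beta * renyi_trace beta x).
  by apply/rowP=> x; rewrite !mxE mxtraceZ realCM renyi_traceE.
rewrite mxpow_diag => [|x|//]; last by rewrite mulr_ge0 ?powR_ge0.
rewrite mxtrace_diag (eq_bigr (fun x => ((p x * powR (renyi_trace beta x) (1 / beta))%:C)%C)).
  by rewrite -realC_sum.
by move=> x _; rewrite mxE powRM ?powR_ge0 // -powRrM mul1r mulfV // powRr1.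
Qed.

Variable alpha : R.
Hypotheses (alpha_gt0 : 0 < alpha) (alpha_lt2 : alpha < 2) (alpha_neq1 : alpha != 1).

Local Notation g := ((1 - alpha) / 2).
Local Notation d := ((alpha - 1) / 2).
Local Notation beta := ((2 - alpha) / alpha).

Let g_neq0 : g != 0. Proof. by apply/eqP => g0; move/eqP: alpha_neq1; apply; lra. Qed.
Let ialpha_neq0 : 1 / alpha != 0. Proof. by rewrite mul1r invr_eq0 gt_eqF. Qed.

Let psiA_mxpow_adj x : adj (mxpow (psiA x) g) = mxpow (psiA x) g.
Proof.
have [V [l MVl]] := psd_decompP (psd_ptr2_proj (psi x)).
exact: psd_decomp_adj (psd_decomp_mxpow MVl g_neq0).
Qed.

(* [(psi^x_A)^g (x) 1 |psi x>], whose [B]-marginal is the [x]-block of the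
   operator inside [I_alpha]. *)
Let w x := (mxpow (psiA x) g *t (1%:M : 'M[C]_b)) *m psi x.

Lemma mxtrace_mxpow_ptr1_w x :
  \tr (mxpow (ptr1 (proj (w x))) (1 / alpha)) = ((renyi_trace beta x)%:C)%C.
Proof.
have [V [l MVl]] := psd_decompP (psd_ptr2_proj (psi x)).
have g2_neq0 : g + 1 + g != 0 by apply/eqP => g0; move: alpha_lt2; lra.
have -> : beta = (g + 1 + g) * (1 / alpha) by field; rewrite gt_eqF.
rewrite /mxpow mxtrace_mxfun_ptr1_proj -/(mxpow _ _) ptr2_proj vec_to_mx_tens adjM.
rewrite !mulmxA -[_ *m adj (vec_to_mx (psi x))]mulmxA -ptr2_proj psiA_mxpow_adj.
rewrite (mxpow_sandwich MVl g_neq0 g2_neq0) (mxpow_mxpow MVl g2_neq0 ialpha_neq0).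
by rewrite renyi_traceE // mulf_neq0.
Qed.

Lemma ptr_first_cq_state_sandwich :
  ptr_first (ext_mid b (mxpow (ptr_mid sigma) g) *m mxpow sigma alpha *m
             ext_mid b (mxpow (ptr_mid sigma) g)) =
  bdiag (fun x => ((p x)%:C)%C *: ptr1 (proj (w x))).
Proof.
rewrite ptr_mid_cq_state mxpow_bdiagZ // => [|x]; last exact: psd_ptr2_proj.
rewrite ext_mid_bdiag mxpow_cq_state ?gt_eqF // !bdiag_mul ptr_first_bdiag.
apply: bdiag_ext => x; have galpha : g + alpha + g = 1 by field.
rewrite !tensmxZl scalemx_mul3 -!realCM powR_sandwich ?galpha ?gt_eqF // powRr1 //.
by rewrite ptr1Z /w /proj adjM adj_tensmx psiA_mxpow_adj adj1 !mulmxA.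
Qed.

Lemma tens1mx_mxpow_ptr1_cq_state :
  (1%:M : 'M[C]_b) *t mxpow (ptr1 sigma) d =
  bdiag (fun x => ((powR (p x) d)%:C)%C *: (1%:M : 'M[C]_b)).
Proof.
have d_neq0 : d != 0 by apply/eqP => d0; move/eqP: alpha_neq1; apply; lra.
rewrite ptr1_cq_state (mxpow_diag p_ge0 d_neq0) tens1mx_diag.
by apply: bdiag_ext => x; rewrite mxE.
Qed.

Lemma renyi_cmi_cq_state :
  renyi_cmi alpha sigma = alpha / (alpha - 1) * ln (\sum_x p x * renyi_trace beta x).
Proof.
have d3 : d + 1 + d = alpha by field.
rewrite /renyi_cmi ptr_first_cq_state_sandwich tens1mx_mxpow_ptr1_cq_state !bdiag_mul.
under bdiag_ext => x do rewrite scalemx_mul3 mul1mx mulmx1 -!realCM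
  -{2}(powRr1 (p_ge0 x)) powR_sandwich ?p_ge0 ?oner_neq0 ?d3 ?gt_eqF //.
rewrite (mxpow_bdiagZ (fun x => psd_ptr1_proj (w x)) (fun x => powR_ge0 _ _) ialpha_neq0).
rewrite mxtrace_bdiag.
under eq_bigr => x _ do rewrite mxtraceZ mxtrace_mxpow_ptr1_w -powRrM mul1r
  mulfV ?gt_eqF // powRr1 // -realCM.
by rewrite -realC_sum.
Qed.

End ClassicalExtension.

Section PowerMeans.
Variable R : realType.
Variables (k : nat) (p : 'I_k -> R).
Hypotheses (p_ge0 : forall x, 0 <= p x) (p_sum1 : \sum_x p x = 1).

Lemma wsum_gt0 (U : 'I_k -> R) : (forall x, 0 < U x) -> 0 < \sum_x p x * U x.
Proof.
move=> U_gt0; have [x px_gt0] : exists x, 0 < p x.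
  have [x|p_le0] := pickP (fun x => 0 < p x); first by exists x.
  move: p_sum1; rewrite big1 => [/eqP|x _]; first by rewrite eq_sym oner_eq0.
  by have := p_ge0 x; rewrite le_eqVlt p_le0 orbF => /eqP <-.
apply: lt_le_trans (mulr_gt0 px_gt0 (U_gt0 x)) _.
by rewrite (bigD1 x) //= lerDl sumr_ge0 // => y _; rewrite mulr_ge0 ?p_ge0 ?ltW.
Qed.

(* Young's inequality with second argument [1]. *)
Lemma powR_le_affine (u s : R) : 0 <= u -> 0 < s < 1 -> powR u s <= s * u + (1 - s).
Proof.
move=> u_ge0 /andP[s_gt0 s_lt1].
have := @conjugate_powR R (powR u s) 1 s^-1 (1 - s)^-1 (powR_ge0 _ _) ler01.
rewrite -powRrM mulfV ?gt_eqF // powRr1 // powR1 !invrK mulr1 mulrC [_ * (1 - s)]mulrC mulr1.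
by apply; rewrite ?invr_gt0 ?subr_gt0 // addrC subrK.
Qed.

Lemma jensen_powR (U : 'I_k -> R) (s : R) : (forall x, 0 < U x) -> 0 < s < 1 ->
  \sum_x p x * powR (U x) s <= powR (\sum_x p x * U x) s.
Proof.
move=> U_gt0 s01; set m := \sum_x p x * U x; have m_gt0 : 0 < m by apply: wsum_gt0.
have powRE x : powR (U x) s = powR m s * powR (U x / m) s.
  by rewrite -powRM ?divr_ge0 ?ltW // mulrC divfK ?gt_eqF.
under eq_bigr do rewrite powRE mulrCA.
rewrite -mulr_sumr -[X in _ <= X]mulr1 ler_wpM2l ?powR_ge0 //.
apply: le_trans (_ : \sum_x p x * (s * (U x / m) + (1 - s)) <= 1).
  apply: ler_sum => x _; apply: ler_wpM2l => //.
  by apply: powR_le_affine => //; rewrite divr_ge0 ?ltW.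
have pUm : \sum_x p x * (U x / m) = 1.
  by rewrite (eq_bigr (fun x => p x * U x / m)) => [|x _]; rewrite ?mulrA // -mulr_suml mulfV ?gt_eqF.
under eq_bigr do rewrite mulrDr mulrCA.
by rewrite big_split /= -mulr_sumr -mulr_suml pUm p_sum1 mulr1 mul1r addrC subrK.
Qed.

(* Both sides are the same multiple [c = alpha / (2 (alpha - 1))] of a logarithm
   of a power mean; the sign of [c] decides which Jensen inequality is needed. *)
Lemma renyi_power_mean_ineq (T : 'I_k -> R) (alpha : R) :
  (forall x, 0 < T x) -> 0 < alpha -> alpha < 2 -> alpha != 1 ->
  1 / 2 * (alpha / (alpha - 1) * ln (\sum_x p x * T x)) <=
  (2 - alpha) / alpha / (1 - (2 - alpha) / alpha) *
    ln (\sum_x p x * powR (T x) (1 / ((2 - alpha) / alpha))).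
Proof.
move=> T_gt0 alpha_gt0 alpha_lt2 alpha_neq1.
have alpha_neq0 : alpha != 0 by rewrite gt_eqF.
have alpha1_neq0 : alpha - 1 != 0 by rewrite subr_eq0.
set beta := (2 - alpha) / alpha.
have beta_gt0 : 0 < beta by rewrite divr_gt0 // subr_gt0.
set S1 := \sum_x p x * T x; set S2 := \sum_x p x * powR (T x) (1 / beta).
have S1_gt0 : 0 < S1 by apply: wsum_gt0.
have S2_gt0 : 0 < S2 by apply: wsum_gt0 => x; apply: powR_gt0.
set c := alpha / (2 * (alpha - 1)).
have -> : 1 / 2 * (alpha / (alpha - 1) * ln S1) = c * ln S1 by rewrite /c; field.
have -> : beta / (1 - beta) * ln S2 = c * (beta * ln S2).
  rewrite /c /beta; field; rewrite alpha1_neq0 alpha_neq0 /=.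
  by apply/eqP => E; move/eqP: alpha_neq1; apply; lra.
have [alpha_gt1|alpha_le1] := ltP 1 alpha.
  have beta01 : 0 < beta < 1 by rewrite beta_gt0 /beta ltr_pdivrMr // mul1r; lra.
  apply: ler_wpM2l; first by rewrite divr_ge0 ?mulr_ge0 ?subr_ge0 ?ltW.
  rewrite -ln_powR ler_ln ?posrE ?powR_gt0 //.
  have := jensen_powR (fun x => powR_gt0 (1 / beta) (T_gt0 x)) beta01.
  congr (_ <= _); apply: eq_bigr => x _.
  by rewrite -powRrM mul1r mulVf ?gt_eqF // powRr1 // ltW.
have c_le0 : c <= 0 by rewrite /c ler_ndivrMr ?mul0r ?ltW //; lra.
have ibeta01 : 0 < 1 / beta < 1.
  by rewrite mul1r invr_gt0 beta_gt0 invf_lt1 // /beta ltr_pdivlMr // mul1r; lra.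
apply: ler_wnM2l => //.
have : ln S2 <= 1 / beta * ln S1.
  by rewrite -ln_powR ler_ln ?posrE ?powR_gt0 //; apply: jensen_powR ibeta01.
move/(ler_wpM2l (ltW beta_gt0)).
by rewrite mulrA mul1r mulfV ?gt_eqF // mul1r.
Qed.

End PowerMeans.

Theorem proposition6 (R : realType) (alpha : R) (dA dB : nat)
    (rho : 'M[R[i]]_(dA * dB)) :
  0 < alpha < 2 -> alpha != 1 -> density rho ->
  (renyi_sq_ent alpha rho <= renyi_eof ((2 - alpha) / alpha) rho)%E.
Proof.
move=> /andP[alpha_gt0 alpha_lt2] alpha_neq1 _.
apply/ereal_infP => _ [k [p [psi [p_ge0 [p_sum1 [psi_unit [rhoE ->]]]]]]].
have beta_neq0 : (2 - alpha) / alpha != 0.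
  by rewrite mulf_neq0 ?invr_eq0 ?gt_eqF // subr_gt0.
have sq_le : (ereal_inf [set x | exists e (omega : 'M[R[i]]_(dA * dB * e)),
    density omega /\ ptr2 omega = rho /\ x = (renyi_cmi alpha omega)%:E] <=
    (renyi_cmi alpha (cq_state p psi))%:E)%E.
  apply: ereal_inf_lbound; exists k, (cq_state p psi).
  by rewrite ptr2_cq_state rhoE; split=> //; apply: density_cq_state.
apply: le_trans (lee_wpmul2l _ sq_le) _; first by rewrite lee_fin divr_ge0.
rewrite -EFinM lee_fin renyi_cmi_cq_state // renyi_cond_ent_cq_state //.
exact: renyi_power_mean_ineq (fun x => renyi_trace_gt0 psi_unit x beta_neq0) _ _ _.
Qed.
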